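(* Let $\alpha$ be a (jointly continuous) action of a locally compact group $G$ on a locally compact Hausdorff space $M$, and so on $C_\infty(M)$ via $(\alpha_xf)(m)=f(\alpha_x^{-1}(m))$. If $\alpha$ on $C_\infty(M)$ is integrable, then every $\alpha$-orbit in $M$ is closed, and the stability subgroup of each point of $M$ is compact.
   Context: $G$ carries a fixed left Haar measure. Let $\mathcal B$ be the set of $\lambda\in L^\infty(G)$ with compact support and $0\le\lambda\le1$, directed pointwise; for $a\in A=C_\infty(M)$, $p_\lambda(a)=\int\lambda(x)\alpha_x(a)\,dx$. An element $a\in A^+$ is order-integrable if $\sup_{\lambda\in\mathcal B}\|p_\lambda(a)\|<\infty$ (equivalently the increasing net is bounded above in $A''$); $\mathcal M_\alpha$ is the linear span of order-integrable elements, and $\alpha$ is integrable if $\mathcal M_\alpha$ is dense in $A$. *)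

From HB Require Import structures.
From mathcomp Require Import all_boot all_order all_algebra.
From mathcomp Require Import all_classical all_reals all_analysis.
Set Implicit Arguments. Unset Strict Implicit. Unset Printing Implicit Defensive.
Import Order.TTheory GRing.Theory Num.Theory.
Import numFieldNormedType.Exports.
Local Open Scope classical_set_scope.
Local Open Scope ring_scope.

Definition borel_of (T : ptopologicalType) := g_sigma_algebraType (@open T).

Definition is_group (G : Type) (mul : G -> G -> G) (inv : G -> G) (one : G) :=
  [/\ (forall x y z, mul x (mul y z) = mul (mul x y) z),
      (forall x, mul one x = x /\ mul x one = x) &
      (forall x, mul (inv x) x = one /\ mul x (inv x) = one)].

Definition locally_compact_group (G : ptopologicalType)
    (mul : G -> G -> G) (inv : G -> G) (one : G) :=
  [/\ is_group mul inv one,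
      continuous (fun p : G * G => mul p.1 p.2),
      continuous inv,
      hausdorff_space G &
      locally_compact [set: G]].

Definition is_left_Haar (R : realType) (G : ptopologicalType)
    (mul : G -> G -> G) (mu : set (borel_of G) -> \bar R) :=
  [/\ (forall (x : G) (A : set (borel_of G)), measurable A ->
         mu [set mul x y | y in A] = mu A),
      (forall K : set G, compact K -> (mu K < +oo)%E),
      (forall U : set G, open U -> U !=set0 -> (0 < mu U)%E),
      (forall A : set (borel_of G), measurable A ->
         mu A = ereal_inf [set mu U | U in [set U : set G | open U /\ A `<=` U]]) &
      (forall U : set G, open U ->
         mu U = ereal_sup [set mu K | K in [set K : set G | compact K /\ K `<=` U]])].

Definition continuous_action (G : ptopologicalType) (M : topologicalType)
    (mul : G -> G -> G) (one : G) (act : G -> M -> M) :=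
  [/\ (forall m, act one m = m),
      (forall x y m, act (mul x y) m = act x (act y m)) &
      continuous (fun p : G * M => act p.1 p.2)].

Definition C_infty (R : realType) (M : topologicalType) (f : M -> R) :=
  continuous f /\
  forall eps : R, 0 < eps ->
    exists K : set M, compact K /\ forall m, ~ K m -> `|f m| < eps.

Definition alpha (R : realType) (G : Type) (M : Type)
    (inv : G -> G) (act : G -> M -> M) (x : G) (f : M -> R) : M -> R :=
  fun m => f (act (inv x) m).

(** The index set B: measurable (representatives of L^infty) functions with
    0 <= lambda <= 1 vanishing outside a compact set. *)
Definition cutoffB (R : realType) (G : ptopologicalType) (lam : G -> R) :=
  [/\ measurable_fun (setT : set (borel_of G)) (lam : borel_of G -> R),
      (forall x, 0 <= lam x <= 1) &
      exists K : set G, compact K /\ forall x, ~ K x -> lam x = 0].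

Definition p_lambda (R : realType) (G : ptopologicalType) (M : Type)
    (inv : G -> G) (act : G -> M -> M) (mu : set (borel_of G) -> \bar R)
    (lam : G -> R) (a : M -> R) (m : M) : \bar R :=
  (\int[mu]_(x in (setT : set (borel_of G))) (lam x * alpha inv act x a m)%:E)%E.

Definition order_integrable (R : realType) (G : ptopologicalType)
    (M : topologicalType) (inv : G -> G) (act : G -> M -> M)
    (mu : set (borel_of G) -> \bar R) (a : M -> R) :=
  [/\ C_infty a,
      (forall m, 0 <= a m) &
      exists C : R, forall lam : G -> R, cutoffB lam ->
        forall m, (`| p_lambda inv act mu lam a m | <= C%:E)%E].

Definition M_alpha (R : realType) (G : ptopologicalType)
    (M : topologicalType) (inv : G -> G) (act : G -> M -> M)
    (mu : set (borel_of G) -> \bar R) (f : M -> R) :=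
  exists s : seq (R * (M -> R)),
    (forall p, p \in s -> order_integrable inv act mu p.2) /\
    f = fun m => \sum_(p <- s) p.1 * p.2 m.

Definition integrable_action (R : realType) (G : ptopologicalType)
    (M : topologicalType) (inv : G -> G) (act : G -> M -> M)
    (mu : set (borel_of G) -> \bar R) :=
  forall f : M -> R, C_infty f ->
    forall eps : R, 0 < eps ->
      exists g : M -> R, M_alpha inv act mu g /\ forall m, `|f m - g m| <= eps.

From HB Require Import structures.
From mathcomp Require Import all_boot all_order all_algebra.
From mathcomp Require Import all_classical all_reals all_analysis.
From mathcomp Require Import lra.

(* Fix m, and let n be any point of M. Integrability yields an order-integrable
   a >= 0 with a(n) > 0, so a(b^-1 u) > c > 0 for b in an open identity
   neighbourhood A inside a compact K and u in a neighbourhood U of n.  If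
   {x | x m \in U} were in no compact set, one could choose x_1, ..., x_N in it
   with pairwise disjoint translates x_i^-1 A; the integrand of p_lambda(a)(m)
   exceeds c on their union, whose Haar measure is N mu(A), so the indicator
   of the union gives p_lambda(a)(m) >= c N mu(A) for every N, contradicting
   order integrability.  Hence every point has a neighbourhood whose preimage
   under x |-> x m is relatively compact, which makes the orbit of m closed
   and its stabiliser compact. *)

Import Order.TTheory GRing.Theory Num.Theory.
Import numFieldNormedType.Exports.
Local Open Scope classical_set_scope.
Local Open Scope ring_scope.

Section GroupLaws.
Context {G : Type} {mul : G -> G -> G} {inv : G -> G} {one : G}.
Hypothesis grp : is_group mul inv one.

Lemma grp_mulA x y z : mul x (mul y z) = mul (mul x y) z.
Proof. by case: grp. Qed.

Lemma grp_mul1g x : mul one x = x.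
Proof. by case: grp => _ /(_ x)[]. Qed.

Lemma grp_mulg1 x : mul x one = x.
Proof. by case: grp => _ /(_ x)[]. Qed.

Lemma grp_mulVg x : mul (inv x) x = one.
Proof. by case: grp => _ _ /(_ x)[]. Qed.

Lemma grp_mulgV x : mul x (inv x) = one.
Proof. by case: grp => _ _ /(_ x)[]. Qed.

Lemma grp_mulKg x y : mul (inv x) (mul x y) = y.
Proof. by rewrite grp_mulA grp_mulVg grp_mul1g. Qed.

Lemma grp_mulKVg x y : mul x (mul (inv x) y) = y.
Proof. by rewrite grp_mulA grp_mulgV grp_mul1g. Qed.

Lemma grp_mulgK x y : mul (mul y x) (inv x) = y.
Proof. by rewrite -grp_mulA grp_mulgV grp_mulg1. Qed.

Lemma grp_mulgKV x y : mul (mul y (inv x)) x = y.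
Proof. by rewrite -grp_mulA grp_mulVg grp_mulg1. Qed.

Lemma grp_invgK x : inv (inv x) = x.
Proof. by rewrite -[LHS]grp_mulg1 -(grp_mulVg x) grp_mulKg. Qed.

Lemma grp_invMg x y : inv (mul x y) = mul (inv y) (inv x).
Proof.
have xyK : mul (mul x y) (mul (inv y) (inv x)) = one.
  by rewrite -grp_mulA grp_mulKVg grp_mulgV.
by rewrite -[LHS]grp_mulg1 -xyK grp_mulKg.
Qed.

Lemma grp_invg1 : inv one = one.
Proof. by rewrite -[LHS]grp_mulg1 grp_mulVg. Qed.

Lemma grp_left_translates_meet (K : set G) x x' :
  [set mul (inv x) k | k in K] `&` [set mul (inv x') k | k in K] !=set0 ->
  [set mul (mul k.2 (inv k.1)) x | k in K `*` K] x'.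
Proof.
case=> _ [[k1 Kk1 <-] [k2 Kk2 e]]; exists (k1, k2) => //=.
have -> : k2 = mul x' (mul (inv x) k1) by rewrite -e grp_mulKVg.
by rewrite grp_mulA grp_mulgK grp_mulgKV.
Qed.

End GroupLaws.

Section TopologicalGroup.
Context {G : topologicalType} {mul : G -> G -> G} {inv : G -> G} {one : G}.
Hypotheses (grp : is_group mul inv one)
  (mul_cont : continuous (fun p : G * G => mul p.1 p.2))
  (inv_cont : continuous inv).

Lemma continuous_grp_mul (T : topologicalType) (f g : T -> G) :
  continuous f -> continuous g -> continuous (fun t => mul (f t) (g t)).
Proof.
move=> cf cg t; apply: continuous2_cvg; last exact: cg; last exact: cf.
exact: (mul_cont (f t, g t)).
Qed.

Lemma continuous_left_mul z : continuous (mul z).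
Proof.
apply: (@continuous_grp_mul _ (fun=> z) id) => t; [exact: cvg_cst|exact: cvg_id].
Qed.

Lemma open_left_translate z (A : set G) : open A -> open [set mul z a | a in A].
Proof.
have -> : [set mul z a | a in A] = mul (inv z) @^-1` A.
  apply/seteqP; split=> [_ [a Aa <-]|y Ay]; first by rewrite /= (grp_mulKg grp).
  by exists (mul (inv z) y); rewrite ?(grp_mulKVg grp).
exact: (continuousP _).1 (continuous_left_mul _) _.
Qed.

Lemma compact_left_translate z (K : set G) :
  compact K -> compact [set mul z k | k in K].
Proof.
move=> cK; apply: continuous_compact cK.
exact/continuous_subspaceT/continuous_left_mul.
Qed.

Lemma compact_translates_meet (K : set G) x :
  compact K -> compact [set mul (mul k.2 (inv k.1)) x | k in K `*` K].
Proof.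
move=> cK; apply: continuous_compact; last exact: compact_setX.
apply: continuous_subspaceT; apply: continuous_grp_mul; last by move=> ?; exact: cvg_cst.
apply: continuous_grp_mul; first by move=> ?; exact: cvg_snd.
by move=> p; apply: continuous_comp; [exact: cvg_fst|exact: inv_cont].
Qed.

End TopologicalGroup.

Lemma open_measurable_borel (G : ptopologicalType) (A : set G) :
  open A -> measurable (A : set (borel_of G)).
Proof. exact: sub_sigma_algebra. Qed.

Section Packing.
Context {R : realType} {G : ptopologicalType}.
Context {mul : G -> G -> G} {inv : G -> G} {one : G}.
Context {mu : {measure set (borel_of G) -> \bar R}}.
Hypotheses (grp : is_group mul inv one)
  (mul_cont : continuous (fun p : G * G => mul p.1 p.2))
  (inv_cont : continuous inv)
  (mu_linv : forall x (A : set (borel_of G)), measurable A ->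
     mu [set mul x y | y in A] = mu A).

Local Notation translate x B := [set mul (inv x) b | b in B].

Lemma packing_left_translates (A K X : set G) (r : R) :
  open A -> (r%:E <= mu A)%E -> compact K -> A `<=` K ->
  (forall L, compact L -> ~ X `<=` L) ->
  forall N : nat, exists V : set G,
    [/\ measurable (V : set (borel_of G)), ((N%:R * r)%:E <= mu V)%E,
        V `<=` \bigcup_(x in X) translate x A &
        exists2 L, compact L & V `<=` L].
Proof.
move=> oA rA cK AK nX.
pose meets x := [set mul (mul k.2 (inv k.1)) x | k in K `*` K].
have mtr x : measurable (translate x A : set (borel_of G)).
  by apply: open_measurable_borel; exact: (open_left_translate grp mul_cont).
suff packing N : exists V L, [/\ measurable (V : set (borel_of G)),
    ((N%:R * r)%:E <= mu V)%E, V `<=` \bigcup_(x in X) translate x A,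
    compact L /\ (forall x, ~ L x -> translate x K `&` V = set0) &
    exists2 S, compact S & V `<=` S].
  by move=> N; have [V [L [mV muV VX _ VS]]] := packing N; exists V.
elim: N => [|N [V [L [mV muV VX [cL LV] [S cS VS]]]]].
  exists set0, set0; split=> //; last by exists set0; [exact: compact0|].
  - by rewrite mul0r measure0.
  - by split=> [|x _]; [exact: compact0|rewrite setI0].
have [x Xx nLx] : exists2 x, X x & ~ L x.
  apply: contrapT => noX; apply: (nX L cL) => x Xx.
  by apply: contrapT => nLx; apply: noX; exists x.
have AxV : translate x A `&` V = set0.
  apply/seteqP; split=> // y [[a Aa <-] Vy].
  by rewrite -(LV x nLx); split=> //; exists a => //; exact: AK.
exists (translate x A `|` V), (meets x `|` L); split.
- exact: measurableU.
- have muA : mu (translate x A) = mu A.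
    by apply: mu_linv; exact: open_measurable_borel.
  have muU : mu (translate x A `|` V) = (mu (translate x A) + mu V)%E.
    exact: measureU.
  by rewrite muU muA -addn1 natrD mulrDl mul1r EFinD addeC leeD.
- by move=> y [Ay|/VX//]; exists x.
- split=> [|x' nx'].
    exact/compactU/cL/(compact_translates_meet mul_cont inv_cont).
  rewrite setIUr (LV x'); last by move=> ?; apply: nx'; right.
  rewrite setU0; apply/seteqP; split=> // y [Ky Ay].
  apply: nx'; left; apply: (grp_left_translates_meet grp).
  by exists y; split=> //; case: Ay => a Aa <-; exists a => //; exact: AK.
- exists (translate x K `|` S).
    exact/compactU/cS/(compact_left_translate mul_cont).
  by move=> y [[a Aa <-]|/VS]; [left; exists a => //; exact: AK|right].
Qed.

End Packing.

Definition proper_at {X Y : topologicalType} (f : X -> Y) (y : Y) :=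
  exists2 U, nbhs y U & exists2 L, compact L & f @^-1` U `<=` L.

Section ProperAt.
Variables (X Y : topologicalType) (f : X -> Y).
Hypotheses (f_cont : continuous f) (hY : hausdorff_space Y).

Lemma closed_range_proper_at : (forall y, proper_at f y) -> closed (range f).
Proof.
move=> fp y cly; have [U nU [L cL UL]] := fp y.
have clfL : closed (f @` L).
  exact/(compact_closed hY)/(continuous_compact _ cL)/continuous_subspaceT.
have /clfL[x _ <-] : closure (f @` L) y.
  move=> B nB; have [_ [[x _ <-] [Ux Bx]]] := cly _ (filterI nU nB).
  by exists (f x); split=> //; exists x => //; exact: UL.
by exists x.
Qed.

Lemma compact_fiber_proper_at y : proper_at f y -> compact (f @^-1` [set y]).
Proof.
move=> [U nU [L cL UL]]; apply: subclosed_compact cL _.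
  apply: preimage_closed => [x _|]; first exact: f_cont.
  exact/accessible_closed_set1/hausdorff_accessible.
by move=> x /= fxy; apply: UL; rewrite /= fxy; exact: nbhs_singleton.
Qed.

End ProperAt.

Lemma C_infty_bump (R : realType) {M : topologicalType} (n : M) :
  hausdorff_space M -> locally_compact [set: M] ->
  exists2 f : M -> R, C_infty f & f n = 1.
Proof.
move=> hM lcM; have [K Kn [cK _]] := lcM n I; rewrite withinET in Kn.
pose B := ~` K°.
have clB : closed B by rewrite closedC; exact: open_interior.
have nBn : ~ B n by apply.
have sep := @locally_compact_completely_regular M R lcM hM n B clB nBn.
pose u : M -> R := Urysohn [set n] B.
exists (fun x => 1 - u x).
  split=> [x|eps eps0].
    by apply: cvgB; [exact: cvg_cst|exact: Urysohn_continuous].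
  exists K; split=> // x nKx.
  have Bx : B x by move=> /interior_subset.
  have -> : u x = 1 by apply: (Urysohn_sub1 (R:=R) sep); exists x.
  by rewrite subrr normr0.
have -> : u n = 0 by apply: (Urysohn_sub0 (R:=R) sep); exists n.
by rewrite subr0.
Qed.

Lemma integrable_action_pos {R : realType} {G : ptopologicalType} {inv : G -> G}
    {mu : {measure set (borel_of G) -> \bar R}} {M : topologicalType}
    {act : G -> M -> M} :
  hausdorff_space M -> locally_compact [set: M] -> integrable_action inv act mu ->
  forall n, exists2 a : M -> R, order_integrable inv act mu a & 0 < a n.
Proof.
move=> hM lcM hI n; have [f Cf fn] := C_infty_bump R n hM lcM.
have [_ [[s [s_oi ->]] fs]] := hI f Cf (1 / 2) ltac:(by rewrite divr_gt0).
have [p ps pn] : exists2 p, p \in s & p.2 n != 0.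
  apply: contrapT => s0; have := fs n; rewrite fn big_seq big1 ?subr0 ?normr1.
    by rewrite ler_pdivlMr // mul1r; lra.
  move=> p ps; apply/eqP; rewrite mulf_eq0 orbC; apply/orP; left.
  by apply: contrapT => /negP pn; apply: s0; exists p.
exists p.2; first exact: s_oi.
by have [_ a0 _] := s_oi p ps; rewrite lt_neqAle eq_sym pn a0.
Qed.

(* No measurability is needed: the integral of a nonnegative function is the
   supremum of the integrals of the simple functions below it. *)
Lemma ge0_le_integralT d (T : measurableType d) (R : realType)
    (mu : {measure set T -> \bar R}) (f g : T -> \bar R) :
  (forall x, 0 <= f x)%E -> (forall x, f x <= g x)%E ->
  (\int[mu]_(x in setT) f x <= \int[mu]_(x in setT) g x)%E.
Proof.
move=> f0 fg; have g0 x : (0 <= g x)%E by exact: le_trans (f0 x) (fg x).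
rewrite !ge0_integralTE//; apply: ge_ereal_sup => _ [h /= hf <-].
by apply: ereal_sup_ubound; exists h => //= x; exact: le_trans (hf x) (fg x).
Qed.

Lemma gt0_fin_lower_bound {R : realDomainType} (x : \bar R) :
  (0 < x)%E -> exists2 r : R, 0 < r & (r%:E <= x)%E.
Proof.
by case: x => [r||] // r0; [exists r|exists 1 => //; exact: leey].
Qed.

Section IntegrableAction.
Context {R : realType} {G : ptopologicalType}.
Context {mul : G -> G -> G} {inv : G -> G} {one : G}.
Context {mu : {measure set (borel_of G) -> \bar R}}.
Context {M : topologicalType} {act : G -> M -> M}.

Lemma cutoffB_indic (V : set G) :
  measurable (V : set (borel_of G)) -> (exists2 K, compact K & V `<=` K) ->
  cutoffB (\1_V : G -> R).
Proof.
move=> mV [K cK VK]; split.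
- exact: measurable_realfun.measurable_indic.
- by move=> x; rewrite indicE; case: (x \in V); rewrite /= ?lexx ?ler01.
- by exists K; split=> // x nKx; rewrite indicE memNset // => /VK.
Qed.

Lemma p_lambda_indic_ge (V : set G) (a : M -> R) (m : M) (c : R) :
  0 <= c -> measurable (V : set (borel_of G)) ->
  (forall y, V y -> c <= a (act (inv y) m)) ->
  (c%:E * mu V <= p_lambda inv act mu \1_V a m)%E.
Proof.
move=> c0 mV Vc.
have <- : (\int[mu]_(x in setT) (c * \1_V x)%:E = c%:E * mu V)%E.
  rewrite (integralZl_indic _ (fun _ : R => (V : set (borel_of G)))) //.
    by rewrite integral_indic // setIT.
  by rewrite ltNge c0.
apply: ge0_le_integralT => x; rewrite lee_fin indicE /alpha.
  by case: (x \in V); rewrite /= ?mulr1 ?mulr0.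
case: (boolP (x \in V)) => [/set_mem/Vc|_] /=; first by rewrite mulr1 mul1r.
by rewrite mulr0 mul0r.
Qed.

Lemma order_integrable_superlevel_bounded (a : M -> R) (m : M) (c : R) :
  order_integrable inv act mu a -> 0 <= c ->
  exists C : R, forall V : set G, measurable (V : set (borel_of G)) ->
    (exists2 K, compact K & V `<=` K) ->
    (forall y, V y -> c <= a (act (inv y) m)) -> (c%:E * mu V <= C%:E)%E.
Proof.
move=> [_ _ [C aC]] c0; exists C => V mV VK Vc.
apply: le_trans (p_lambda_indic_ge _ _ _ _ c0 mV Vc) _.
exact: le_trans (lee_abs _) (aC _ (cutoffB_indic _ mV VK) m).
Qed.

Hypotheses (hG : locally_compact_group mul inv one) (hmu : is_left_Haar mul mu)
  (hact : continuous_action mul one act).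

Lemma superlevel_nbhs (a : M -> R) (n : M) (c : R) :
  continuous a -> c < a n ->
  exists2 U, nbhs n U & exists A K, [/\ open A, A one, compact K, A `<=` K &
    forall b u, A b -> U u -> c < a (act (inv b) u)].
Proof.
move=> a_cont cn.
have [grp _ inv_cont _ lcG] := hG; have [act1 _ act_cont] := hact.
have a_act_cont : {for (one, n), continuous (a \o (fun p : G * M => act p.1 p.2))}.
  exact: continuous_comp (act_cont (one, n)) (a_cont _).
have near_c : \forall p \near (one, n), c < a (act p.1 p.2).
  have ac : c < (a \o (fun p : G * M => act p.1 p.2)) (one, n) by rewrite /= act1.
  exact: a_act_cont _ (lt_nbhsr ac).
have [[W U] [/= nW nU] WUc] := near_c.
exists U => //.
have [K K1 [cK _]] := lcG one I; rewrite withinET in K1.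
exists (K° `&` (inv @^-1` W)°), K; split=> //.
- by apply: openI; exact: open_interior.
- by split=> //; apply: inv_cont; rewrite (grp_invg1 grp).
- by move=> y [/interior_subset].
- by move=> b u [_ /interior_subset Wb] Uu; exact: (WUc (_, _)).
Qed.

Lemma order_integrable_proper_at (a : M -> R) (m n : M) :
  order_integrable inv act mu a -> 0 < a n -> proper_at (act ^~ m) n.
Proof.
move=> a_oi an; have [[a_cont _] _ _] := a_oi.
have [grp mul_cont inv_cont _ _] := hG; have [mu_linv _ mu_pos _ _] := hmu.
have [_ actM _] := hact.
pose c := a n / 2; have c0 : 0 < c by rewrite divr_gt0.
have cn : c < a n by rewrite /c; lra.
have [U nU [A [K [oA A1 cK AK Ac]]]] := superlevel_nbhs a n c a_cont cn.
exists U => //.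
have [r r0 rA] := gt0_fin_lower_bound (mu A) (mu_pos A oA (ex_intro _ one A1)).
have [C muC] := order_integrable_superlevel_bounded a m c a_oi (ltW c0).
apply: contrapT => noL.
have nX L : compact L -> ~ [set x | U (act x m)] `<=` L.
  by move=> cL XL; apply: noL; exists L.
(* Enough disjoint translates to force c * mu V > C. *)
pose N := (Num.truncn (C / (c * r))).+1.
have [V [mV muV VX VK]] :=
  packing_left_translates grp mul_cont inv_cont mu_linv _ _ _ _ oA rA cK AK nX N.
have Vc y : V y -> c <= a (act (inv y) m).
  move=> /VX [x Ux [b Ab <-]].
  by rewrite (grp_invMg grp) (grp_invgK grp) actM; apply/ltW/Ac.
apply/negP: (muC V mV VK Vc); rewrite -ltNge.
apply: lt_le_trans (lee_wpmul2l _ muV); last by rewrite lee_fin ltW.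
rewrite lte_fin mulrCA -ltr_pdivrMr ?mulr_gt0 //.
exact: truncnS_gt.
Qed.

Lemma continuous_orbit_map (m : M) : continuous (act ^~ m).
Proof.
have [_ _ act_cont] := hact.
move=> x; apply: (@continuous2_cvg _ _ _ _ _ _ id (fun=> m) act).
- exact: (act_cont (x, m)).
- exact: cvg_id.
- exact: cvg_cst.
Qed.

End IntegrableAction.

Theorem proposition1p17 (R : realType) (G : ptopologicalType)
    (mul : G -> G -> G) (inv : G -> G) (one : G)
    (mu : {measure set (borel_of G) -> \bar R})
    (M : topologicalType) (act : G -> M -> M) :
  locally_compact_group mul inv one ->
  is_left_Haar mul mu ->
  hausdorff_space M ->
  locally_compact [set: M] ->
  continuous_action mul one act ->
  integrable_action inv act mu ->
  forall m : M,
    closed [set act x m | x in [set: G]] /\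
    compact [set x : G | act x m = m].
Proof.
move=> hG hmu hM lcM hact hI m.
have proper n : proper_at (act ^~ m) n.
  have [a a_oi an] := integrable_action_pos hM lcM hI n.
  exact: order_integrable_proper_at hG hmu hact a m n a_oi an.
have orbit_cont := continuous_orbit_map hact m.
split; [exact: closed_range_proper_at | exact: compact_fiber_proper_at].
Qed.
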